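(* Let $k$ be a field of characteristic zero, $n\ge1$, $S=k[x_1,\ldots,x_n]$, and $(S,L)$ a triangularizable Lie–Rinehart algebra with enveloping algebra $U$. Then the inclusion $S\subseteq U$ induces an isomorphism $H^0(S,U)\cong S$; that is, $H^0(S,U)=\{u\in U:[u,s]=0\text{ for all }s\in S\}$ equals $S$.
   Context: Triangularizable: $L\subseteq\operatorname{Der}(S)$ is an $S$-submodule and Lie subalgebra which is a free $S$-module with basis of derivations $\alpha_1,\ldots,\alpha_n$ such that $\alpha_i(x_j)=0$ for $i>j$ and $\alpha_1(x_1)\cdots\alpha_n(x_n)\ne0$. $U$ is the universal enveloping algebra of $(S,L)$ (containing $S$ as a subalgebra). $H^\bullet(S,U)=\operatorname{Ext}^\bullet_{S\otimes S}(S,U)$ is the Hochschild cohomology of $S$ with values in the $S$-bimodule $U$; in degree zero it is the centralizer of $S$ in $U$. *)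

From HB Require Import structures.
From mathcomp Require Import all_boot all_order all_algebra.
From mathcomp Require Import mpoly.
Set Implicit Arguments. Unset Strict Implicit. Unset Printing Implicit Defensive.
Import GRing.Theory.
Local Open Scope ring_scope.

(* S = k[x_1,...,x_n] is {mpoly k[n]}; variable x_(j+1) is 'X_j, j : 'I_n. *)
(* k-linear endomorphisms of S are represented as plain functions S -> S.  *)

Section LR.
Variables (k : fieldType) (n : nat).
Local Notation S := {mpoly k[n]}.

Definition is_derivation (D : S -> S) : Prop :=
  (forall (c : k) (p q : S), D (c *: p + q) = c *: D p + D q) /\
  (forall p q : S, D (p * q) = D p * q + p * D q).

Definition smul_op (s : S) (D : S -> S) : S -> S := fun p => s * D p.
Definition add_op (D E : S -> S) : S -> S := fun p => D p + E p.
Definition bracket_op (D E : S -> S) : S -> S := fun p => D (E p) - E (D p).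

Record triangularizable (L : (S -> S) -> Prop) (alpha : 'I_n -> (S -> S)) : Prop := {
  tri_der : forall D, L D -> is_derivation D;
  tri_add : forall D E, L D -> L E -> L (add_op D E);
  tri_smul : forall s D, L D -> L (smul_op s D);
  tri_bracket : forall D E, L D -> L E -> L (bracket_op D E);
  tri_basis_in : forall i, L (alpha i);
  tri_span : forall D, L D ->
     exists c : 'I_n -> S, D = (fun p => \sum_(i < n) c i * alpha i p);
  tri_free : forall c : 'I_n -> S,
     (fun p => \sum_(i < n) c i * alpha i p) = (fun _ => 0) -> forall i, c i = 0;
  tri_triang : forall i j : 'I_n, (j < i)%N -> alpha i 'X_j = 0;
  tri_nonzero : \prod_(i < n) alpha i 'X_i != 0
}.

Definition is_kalg_morph (A B : algType k) (f : A -> B) : Prop :=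
  [/\ f 1 = 1, (forall x y, f (x * y) = f x * f y),
      (forall x y, f (x + y) = f x + f y) & (forall (c : k) x, f (c *: x) = c *: f x)].

(* (phi, psi) : (S, L) -> A satisfies the defining relations of the
   enveloping algebra of the Lie-Rinehart algebra (S, L). *)
Definition LR_rep (L : (S -> S) -> Prop) (A : algType k)
    (phi : S -> A) (psi : (S -> S) -> A) : Prop :=
  [/\ is_kalg_morph phi,
      (forall D E, L D -> L E -> psi (add_op D E) = psi D + psi E),
      (forall s D, L D -> psi (smul_op s D) = phi s * psi D),
      (forall D E, L D -> L E -> psi (bracket_op D E) = psi D * psi E - psi E * psi D)
    & (forall s D, L D -> psi D * phi s - phi s * psi D = phi (D s))].

Definition is_enveloping_algebra (L : (S -> S) -> Prop) (U : algType k)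
    (iS : S -> U) (iL : (S -> S) -> U) : Prop :=
  LR_rep L iS iL /\
  forall (A : algType k) (phi : S -> A) (psi : (S -> S) -> A),
    LR_rep L phi psi ->
    exists f : U -> A,
      [/\ is_kalg_morph f, (forall s, f (iS s) = phi s),
          (forall D, L D -> f (iL D) = psi D)
        & (forall g : U -> A, is_kalg_morph g -> (forall s, g (iS s) = phi s) ->
             (forall D, L D -> g (iL D) = psi D) -> forall u, g u = f u)].

End LR.

From HB Require Import structures.
From mathcomp Require Import all_boot all_order all_algebra.
From mathcomp Require Import mpoly.
From mathcomp Require Import boolp.
Set Implicit Arguments. Unset Strict Implicit. Unset Printing Implicit Defensive.
Import GRing.Theory.
Local Open Scope ring_scope.

(** Representing [S] on itself by multiplications and derivations splits
  [iS], so [iS] is injective.  [U] is exhausted by the filtration [U_d]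
  spanned by [iS s] times at most [d] factors [iL D], and modulo [U_(d-1)]
  every element of [U_d] is [sum_m iS (P_m) beta^m] for a homogeneous
  polynomial [P] of degree [d] in [n] variables over [S] (its symbol), where
  [beta^m] is the ordered monomial in [beta_i = iL alpha_i].  Commutation
  with [t] in [S] lowers the filtration by one, and on symbols it acts as the
  derivation [sum_i alpha_i(t) d/dxi_i].  Since [alpha_i(x_j) = 0] for
  [i > j], [alpha_i(x_i) <> 0] and [k] has characteristic zero, a symbol
  killed by all these derivations for [t = x_1, ..., x_n] has degree zero.
  By induction on [d] this shows first that a homogeneous symbol of degree
  [d] vanishing in [U_(d-1)] is zero, and then that an element of [U_d]
  commuting with [S] lies in [U_(d-1)], hence eventually in [U_0 = iS S]. *)

Section Commutator.
Variable R : pzRingType.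
Implicit Types a b c : R.

Lemma commutatorMr a b c :
  a * (b * c) - b * c * a = (a * b - b * a) * c + b * (a * c - c * a).
Proof. by rewrite mulrBl mulrBr !mulrA addrA subrK. Qed.

Lemma commutatorMl a b c :
  a * b * c - c * (a * b) = (a * c - c * a) * b + a * (b * c - c * b).
Proof. by rewrite mulrBl mulrBr !mulrA [RHS]addrC addrA subrK. Qed.

Lemma commutator_shift a b c d :
  b * (a * c) - a * d = (b * a - a * b) * c + a * (b * c - d).
Proof. by rewrite mulrBl mulrBr !mulrA addrA subrK. Qed.

End Commutator.

Section KalgMorphism.
Variables (k : fieldType) (A B : algType k) (f : A -> B).
Hypothesis f_morph : is_kalg_morph f.

Lemma kalg_morph_zmod : zmod_morphism f.
Proof.
by case: f_morph => _ _ fD _ x y; apply/eqP; rewrite eq_sym subr_eq -fD subrK.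
Qed.

Lemma kalg_morph_scalable : scalable f.
Proof. by case: f_morph. Qed.

Lemma kalg_morph_monoid : monoid_morphism f.
Proof. by case: f_morph. Qed.

End KalgMorphism.

Section Subalgebra.
Variables (R : pzRingType) (A : algType R) (S : subalgClosed A).

Record subalg := Subalg { subalg_val : A; subalg_valP : subalg_val \in S }.
HB.instance Definition _ := [isSub for subalg_val].
HB.instance Definition _ := [Choice of subalg by <:].
HB.instance Definition _ := [SubChoice_isSubAlgebra of subalg by <:].

End Subalgebra.

Section LinearEndomorphisms.
Variables (R : comNzRingType) (V : lalgType R).

Record lend := LEnd { lend_fun :> V -> V; lend_linear : linear lend_fun }.
HB.instance Definition _ (f : lend) :=
  GRing.isLinear.Build R V V *:%R f (lend_linear f).
HB.instance Definition _ := gen_eqMixin lend.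
HB.instance Definition _ := gen_choiceMixin lend.

Lemma lend_ext (f g : lend) : f =1 g -> f = g.
Proof.
case: f g => f fL [g gL] /= /funext fg; subst g; congr LEnd; exact: Prop_irrelevance.
Qed.

Definition lend0 := LEnd (linearP (\0 : {linear V -> V})).
Definition lend_opp (f : lend) := LEnd (linearP (\- f)).
Definition lend_add (f g : lend) := LEnd (linearP (f \+ g)).
Definition lend1 := LEnd (linearP (@idfun V)).
Definition lend_mul (f g : lend) := LEnd (linearP (f \o g)).
Fact lend_scale_linear (c : R) (f : lend) : linear (fun x => c *: f x).
Proof. by move=> a x y; rewrite linearP scalerDr !scalerA mulrC. Qed.
Definition lend_scale c f := LEnd (lend_scale_linear c f).

Fact lend_addA : associative lend_add.
Proof. by move=> f g h; apply: lend_ext => x /=; rewrite addrA. Qed.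
Fact lend_addC : commutative lend_add.
Proof. by move=> f g; apply: lend_ext => x /=; rewrite addrC. Qed.
Fact lend_add0 : left_id lend0 lend_add.
Proof. by move=> f; apply: lend_ext => x /=; rewrite add0r. Qed.
Fact lend_addN : left_inverse lend0 lend_opp lend_add.
Proof. by move=> f; apply: lend_ext => x /=; rewrite addNr. Qed.
HB.instance Definition _ :=
  GRing.isZmodule.Build lend lend_addA lend_addC lend_add0 lend_addN.

Fact lend_mulA : associative lend_mul. Proof. by move=> f g h; apply: lend_ext. Qed.
Fact lend_mul1 : left_id lend1 lend_mul. Proof. by move=> f; apply: lend_ext. Qed.
Fact lend_mulr1 : right_id lend1 lend_mul. Proof. by move=> f; apply: lend_ext. Qed.
Fact lend_mulDl : left_distributive lend_mul lend_add.
Proof. by move=> f g h; apply: lend_ext. Qed.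
Fact lend_mulDr : right_distributive lend_mul lend_add.
Proof. by move=> f g h; apply: lend_ext => x /=; rewrite linearD. Qed.
Fact lend1_neq0 : lend1 != 0.
Proof. by apply/eqP => /(congr1 (fun f : lend => f 1)) /eqP; rewrite oner_eq0. Qed.
HB.instance Definition _ := GRing.Zmodule_isNzRing.Build lend
  lend_mulA lend_mul1 lend_mulr1 lend_mulDl lend_mulDr lend1_neq0.

Fact lend_scaleA a b (f : lend) : lend_scale a (lend_scale b f) = lend_scale (a * b) f.
Proof. by apply: lend_ext => x /=; rewrite scalerA. Qed.
Fact lend_scale1 : left_id 1 lend_scale.
Proof. by move=> f; apply: lend_ext => x /=; rewrite scale1r. Qed.
Fact lend_scaleDr : right_distributive lend_scale lend_add.
Proof. by move=> a f g; apply: lend_ext => x /=; rewrite scalerDr. Qed.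
Fact lend_scaleDl f : {morph lend_scale^~ f : a b / a + b}.
Proof. by move=> a b; apply: lend_ext => x /=; rewrite scalerDl. Qed.
HB.instance Definition _ := GRing.Zmodule_isLmodule.Build R lend
  lend_scaleA lend_scale1 lend_scaleDr lend_scaleDl.

Fact lend_scaleAl a (f g : lend) : a *: (f * g) = (a *: f) * g.
Proof. by apply: lend_ext. Qed.
HB.instance Definition _ := GRing.Lmodule_isLalgebra.Build R lend lend_scaleAl.
Fact lend_scaleAr a (f g : lend) : a *: (f * g) = f * (a *: g).
Proof. by apply: lend_ext => x /=; rewrite linearZ. Qed.
HB.instance Definition _ := GRing.Lalgebra_isAlgebra.Build R lend lend_scaleAr.

End LinearEndomorphisms.

Lemma mdeg_eqS (n : nat) (m : 'X_{1..n}) d :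
  mdeg m = d.+1 -> exists i m', m = (U_(i) + m')%MM /\ mdeg m' = d.
Proof.
move=> mdeg_m; have /existsP[i mi] : [exists i, m i != 0%N].
  apply: contraT => /existsPn m0; suff /eqP : mdeg m == 0%N by rewrite mdeg_m.
  by rewrite mdeg_eq0; apply/eqP/mnmP => i; rewrite mnm0E; apply/eqP/negPn/m0.
have Uim : (U_(i) <= m)%MM by rewrite lep1mP.
exists i, (m - U_(i))%MM; rewrite addmC submK //; split=> //.
by move: mdeg_m; rewrite -{1}(submK Uim) mdegD mdeg1 addn1 => -[].
Qed.

Section MPolyHomog.
Variables (R : nzRingType) (n : nat).
Implicit Types (P : {mpoly R[n]}) (m : 'X_{1..n}).

Lemma homog_ind (Q : {mpoly R[n]} -> Prop) d :
    Q 0 -> (forall P1 P2, Q P1 -> Q P2 -> Q (P1 + P2)) ->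
    (forall c m, mdeg m = d -> Q (c *: 'X_[m])) ->
  forall P, P \is d.-homog -> Q P.
Proof.
move=> Q0 QD QX P /dhomogP homP; rewrite (mpolyE P) big_seq.
by apply: big_ind => // m /homP; apply: QX.
Qed.

Lemma mderivXU i j : ('X_i : {mpoly R[n]})^`M(j) = (i == j)%:R.
Proof.
rewrite mderivX mnm1E; case: eqP => [->|_]; last by rewrite scale0r.
by rewrite -{1}(add0m U_(j)%MM) addmK mpolyX0 scale1r.
Qed.

Lemma dhomog0_mpolyC P : P \is 0.-homog -> P = (P@_0)%:MP.
Proof.
move=> /dhomogP homP; apply/mpolyP => m; rewrite mcoeffC.
have [->|m_neq0] := eqVneq m 0%MM; first by rewrite mulr1.
rewrite mulr0; apply/eqP; apply: contraR m_neq0; rewrite -mcoeff_msupp => /homP.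
by move/eqP; rewrite mdeg_eq0.
Qed.

Lemma mderiv_homog P d i : P \is d.+1.-homog -> P^`M(i) \is d.-homog.
Proof.
move=> /dhomogP homP; apply/dhomogP => m; rewrite mcoeff_msupp mcoeff_deriv.
have [/homP|] := boolP (m + U_(i) \in msupp P)%MM.
  by move/eqP => /=; rewrite mdegD mdeg1 addn1 eqSS => /eqP.
by rewrite mcoeff_msupp negbK => /eqP ->; rewrite mul0rn eqxx.
Qed.

End MPolyHomog.

Section MPolyDirDeriv.
Variables (R : comNzRingType) (n : nat).
Implicit Types (P : {mpoly R[n]}) (a : 'I_n -> R).

Definition mdirderiv a P : {mpoly R[n]} := \sum_(i < n) a i *: P^`M(i).

Fact mdirderiv_is_linear a : linear (mdirderiv a).
Proof.
move=> c P Q; rewrite /mdirderiv scaler_sumr -big_split /=; apply: eq_bigr => i _.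
by rewrite linearP scalerDr !scalerA mulrC.
Qed.
HB.instance Definition _ a :=
  GRing.isLinear.Build R {mpoly R[n]} {mpoly R[n]} *:%R (mdirderiv a)
    (mdirderiv_is_linear a).

Lemma mdirderivXM a i P : mdirderiv a ('X_i * P) = a i *: P + 'X_i * mdirderiv a P.
Proof.
rewrite /mdirderiv mulr_sumr.
under eq_bigr do rewrite mderivM scalerDr !scalerAr.
rewrite big_split /= (bigD1 i) //= mderivXU eqxx mul1r big1 ?addr0 // => j /negPf ji.
by rewrite mderivXU eq_sym ji mul0r.
Qed.

Lemma mdirderivC a c : mdirderiv a c%:MP = 0.
Proof. by rewrite /mdirderiv big1 // => i _; rewrite mderivC scaler0. Qed.

Lemma mdirderivU a i : mdirderiv a 'X_i = (a i)%:MP.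
Proof.
rewrite -[X in mdirderiv a X]mulr1 mdirderivXM -mpolyC1 mdirderivC.
by rewrite mulr0 addr0 -mul_mpolyC mulr1.
Qed.

Lemma mdirderiv_homog a P d : P \is d.+1.-homog -> mdirderiv a P \is d.-homog.
Proof.
by move=> homP; apply: rpred_sum => i _; apply/rpredZ/mderiv_homog.
Qed.

End MPolyDirDeriv.

Section MPolyDerivIdomain.
Variables (R : idomainType) (n : nat).
Implicit Types (P : {mpoly R[n]}) (m : 'X_{1..n}).

Lemma mderiv_triangular_eq0 (a : 'I_n -> 'I_n -> R) P :
    (forall i j : 'I_n, (j < i)%N -> a i j = 0) -> (forall i, a i i != 0) ->
    (forall j, mdirderiv (a^~ j) P = 0) ->
  forall i, P^`M(i) = 0.
Proof.
move=> a_triu a_diag aP; suff dP k (i : 'I_n) : (i < k)%N -> P^`M(i) = 0.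
  by move=> i; apply: (dP i.+1).
elim: k i => // k IHk i; rewrite ltnS leq_eqVlt => /predU1P[ik|]; last exact: IHk.
have /eqP := aP i; rewrite /mdirderiv (bigD1 i) //= big1 ?addr0 => [|j /negPf ji].
  by rewrite -mul_mpolyC mulf_eq0 mpolyC_eq0 (negPf (a_diag i)) => /eqP.
have [lt_ji|le_ij] := ltnP j i; first by rewrite IHk ?scaler0 -?ik.
rewrite a_triu ?scale0r // ltn_neqAle le_ij andbT.
by apply: contraFN ji => /eqP ij; apply/eqP/val_inj.
Qed.

Hypothesis R_char0 : [pchar R] =i pred0.

Lemma mpoly_char0 : [pchar {mpoly R[n]}] =i pred0.
Proof.
by apply/pcharf0P => k; rewrite -mpolyC_nat mpolyC_eq0 ((pcharf0P R).1 R_char0).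
Qed.

Lemma mderiv_eq0_mcoeff P i m : P^`M(i) = 0 -> P@_(m + U_(i)) = 0.
Proof.
move/(congr1 (mcoeff m))/eqP; rewrite mcoeff_deriv mcoeff0 -mulr_natr mulf_eq0.
by rewrite ((pcharf0P R).1 R_char0) orbF => /eqP.
Qed.

Lemma mderiv_eq0_homog P d :
  P \is d.+1.-homog -> (forall i, P^`M(i) = 0) -> P = 0.
Proof.
move=> /dhomogP homP dP; apply/mpolyP => m; rewrite mcoeff0.
have [suppm|] := boolP (m \in msupp P); last by rewrite mcoeff_msupp negbK => /eqP.
have [i [m' [-> _]]] := mdeg_eqS (homP m suppm).
by rewrite addmC (mderiv_eq0_mcoeff _ (dP i)).
Qed.

End MPolyDerivIdomain.

Section EnvelopingAlgebra.
Variables (k : fieldType) (n : nat).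
Local Notation S := {mpoly k[n]}.
Variables (L : (S -> S) -> Prop) (alpha : 'I_n -> S -> S).
Hypothesis Ltri : triangularizable L alpha.
Variables (U : algType k) (iS : S -> U) (iL : (S -> S) -> U).
Hypothesis HU : is_enveloping_algebra L iS iL.
Hypothesis k_char0 : [pchar k] =i pred0.

Let rep : LR_rep L iS iL := HU.1.
Let iS_morph : is_kalg_morph iS. Proof. by case: rep. Qed.

HB.instance Definition _ :=
  GRing.isZmodMorphism.Build S U iS (kalg_morph_zmod iS_morph).
HB.instance Definition _ :=
  GRing.isMonoidMorphism.Build S U iS (kalg_morph_monoid iS_morph).
HB.instance Definition _ :=
  GRing.isScalable.Build k S U *:%R iS (kalg_morph_scalable iS_morph).

Lemma iL_smul s D : L D -> iL (smul_op s D) = iS s * iL D.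
Proof. by case: rep => _ _ + _ _; apply. Qed.
Lemma iL_add D E : L D -> L E -> iL (add_op D E) = iL D + iL E.
Proof. by case: rep => _ + _ _ _; apply. Qed.
Lemma iL_bracket D E : L D -> L E -> iL (bracket_op D E) = iL D * iL E - iL E * iL D.
Proof. by case: rep => _ _ _ + _; apply. Qed.
Lemma iL_iS_comm s D : L D -> iL D * iS s - iS s * iL D = iS (D s).
Proof. by case: rep => _ _ _ _; apply. Qed.

Lemma iS_comm s t : iS s * iS t = iS t * iS s.
Proof. by rewrite -!rmorphM mulrC. Qed.

Lemma enveloping_morph_id (g : U -> U) : is_kalg_morph g ->
    (forall s, g (iS s) = iS s) -> (forall D, L D -> g (iL D) = iL D) ->
  forall u, g u = u.
Proof.
case: HU => _ /(_ _ _ _ rep) [f [_ _ _ f_uniq]] g_morph gS gL u.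
by rewrite (f_uniq g) // -(f_uniq idfun).
Qed.

(** * Injectivity of [iS] *)

Definition mul_end (s : S) : lend S := LEnd (linearP (s \*o idfun)).

Definition der_end (D : S -> S) : lend S :=
  if pselect (L D) is left LD then LEnd (tri_der Ltri LD).1 else 0.

Lemma der_endE D : L D -> der_end D =1 D.
Proof. by rewrite /der_end; case: pselect. Qed.

Lemma LR_rep_end : LR_rep L mul_end der_end.
Proof.
split.
- by split=> [|x y|x y|c x]; apply: lend_ext => p /=;
    rewrite ?mul1r ?mulrA ?mulrDl ?scalerAl.
- move=> D E LD LE; apply: lend_ext => p /=.
  by rewrite !der_endE //; exact: (tri_add Ltri).
- move=> s D LD; apply: lend_ext => p /=.
  by rewrite !der_endE //; exact: (tri_smul Ltri).
- move=> D E LD LE; apply: lend_ext => p /=.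
  by rewrite !der_endE //; exact: (tri_bracket Ltri).
- move=> s D LD; apply: lend_ext => p /=.
  by rewrite !der_endE // (tri_der Ltri LD).2 addrK.
Qed.

Lemma iS_inj : injective iS.
Proof.
case: HU => _ /(_ _ _ _ LR_rep_end) [f [_ fS _ _]] s t /(congr1 f).
by rewrite !fS => /(congr1 (fun g : lend S => g 1)) /=; rewrite !mulr1.
Qed.

(** * The filtration of [U] *)

Inductive filt : nat -> U -> Prop :=
  | filt_iS d s : filt d (iS s)
  | filtS d x : filt d x -> filt d.+1 x
  | filtD d x y : filt d x -> filt d y -> filt d (x + y)
  | filt_mulS d s x : filt d x -> filt d (iS s * x)
  | filt_mulL d D x : L D -> filt d x -> filt d.+1 (iL D * x).

Lemma filt_le d e x : (d <= e)%N -> filt d x -> filt e x.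
Proof.
move=> /subnKC <-; elim: (e - d)%N => [|m IHm] dx; first by rewrite addn0.
by rewrite addnS; apply/filtS/IHm.
Qed.

Lemma filt0 d : filt d 0.
Proof. by rewrite -(rmorph0 iS); apply: filt_iS. Qed.

Lemma filt1 d : filt d 1.
Proof. by rewrite -(rmorph1 iS); apply: filt_iS. Qed.

Lemma filtN d x : filt d x -> filt d (- x).
Proof. by move=> dx; rewrite -mulN1r -(rmorphN1 iS); apply: filt_mulS. Qed.

Lemma filtZ d c x : filt d x -> filt d (c *: x).
Proof.
by move=> dx; rewrite -[x]mul1r scalerAl -(rmorph1 iS) -linearZ; apply: filt_mulS.
Qed.

Lemma filt_sum d I (r : seq I) (P : pred I) (F : I -> U) :
  (forall i, P i -> filt d (F i)) -> filt d (\sum_(i <- r | P i) F i).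
Proof. by move=> dF; apply: big_ind => //; [apply: filt0 | apply: filtD]. Qed.

Lemma filtM a b x y : filt a x -> filt b y -> filt (a + b) (x * y).
Proof.
move=> ax by_; elim: ax => {a x} [d s|d x _ IH|d x1 x2 _ IH1 _ IH2|d s x _ IH|].
- apply: (filt_le (leq_addl d b)).
  by rewrite -[y]mul1r mulrA -(rmorph1 iS) -rmorphM; apply: filt_mulS.
- by rewrite addSn; apply: filtS.
- by rewrite mulrDl; apply: filtD.
- by rewrite -mulrA; apply: filt_mulS.
- by move=> d D x LD _ IH; rewrite -mulrA addSn; apply: filt_mulL.
Qed.

Lemma filt_iL D : L D -> filt 1 (iL D).
Proof. by move=> LD; rewrite -[iL D]mulr1 -(rmorph1 iS); apply/filt_mulL/filt_iS. Qed.

Lemma filt0_iS x : filt 0 x -> exists s, x = iS s.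
Proof.
move Ed : 0%N => d dx; elim: dx Ed => // [_ s _|e y z _ IHy _ IHz e0|e s y _ IHy e0].
- by exists s.
- by have [[s ->] [t ->]] := (IHy e0, IHz e0); exists (s + t); rewrite rmorphD.
- by have [t ->] := IHy e0; exists (s * t); rewrite rmorphM.
Qed.

(* [filt_lt d] is [U_(d-1)], with [U_(-1) = 0]. *)
Definition filt_lt d x := if d is d'.+1 then filt d' x else x = 0.

Lemma filt_lt0 d : filt_lt d 0.
Proof. by case: d => //= d; apply: filt0. Qed.

Lemma filt_ltD d x y : filt_lt d x -> filt_lt d y -> filt_lt d (x + y).
Proof. by case: d => [/= -> ->|d]; [rewrite addr0 | apply: filtD]. Qed.

Lemma filt_ltN d x : filt_lt d x -> filt_lt d (- x).
Proof. by case: d => [/= ->|d]; [rewrite oppr0 | apply: filtN]. Qed.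

Lemma filt_ltB d x y : filt_lt d x -> filt_lt d y -> filt_lt d (x - y).
Proof. by move=> dx dy; apply/filt_ltD/filt_ltN. Qed.

Lemma filt_lt_mulS d s x : filt_lt d x -> filt_lt d (iS s * x).
Proof. by case: d => [/= ->|d]; [rewrite mulr0 | apply: filt_mulS]. Qed.

Lemma filt_lt_mulL d D x : L D -> filt_lt d x -> filt d (iL D * x).
Proof.
by case: d => [LD /= ->|d LD dx]; [rewrite mulr0; apply: filt0 | apply: filt_mulL].
Qed.

Lemma filt_lt_le d e x : (d <= e)%N -> filt_lt d x -> filt_lt e x.
Proof.
case: d => [_ /= ->|d]; first exact: filt_lt0.
by case: e => // e de; apply: filt_le.
Qed.

Definition ad (t : S) (x : U) : U := x * iS t - iS t * x.

Fact ad_is_zmod t : zmod_morphism (ad t).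
Proof.
move=> x y; rewrite /ad mulrBl mulrBr !opprB !addrA.
by rewrite [LHS]addrAC [RHS]addrAC [_ - iS t * x - _]addrAC.
Qed.
HB.instance Definition _ t := GRing.isZmodMorphism.Build U U (ad t) (ad_is_zmod t).

Lemma ad_iS t s : ad t (iS s) = 0.
Proof. by rewrite /ad iS_comm subrr. Qed.

Lemma adM t x y : ad t (x * y) = ad t x * y + x * ad t y.
Proof. exact: commutatorMl. Qed.

Lemma ad_mulS t s x : ad t (iS s * x) = iS s * ad t x.
Proof. by rewrite adM ad_iS mul0r add0r. Qed.

Lemma ad_iL t D : L D -> ad t (iL D) = iS (D t).
Proof. exact: iL_iS_comm. Qed.

Lemma ad_filt t d x : filt d x -> filt_lt d (ad t x).
Proof.
elim=> {d x} [d s|d x _ IH|d x y _ IHx _ IHy|d s x _ IH|d D x LD dx IH].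
- by rewrite ad_iS; apply: filt_lt0.
- exact: filt_lt_le IH.
- by rewrite raddfD; apply: filt_ltD.
- by rewrite ad_mulS; apply: filt_lt_mulS.
- by rewrite adM ad_iL //; apply: filtD; [apply: filt_mulS | apply: filt_lt_mulL].
Qed.

Lemma filt_commL D d y : L D -> filt d y -> filt d (iL D * y - y * iL D).
Proof.
move=> LD; elim=> {d y} [d s|d x _ IH|d x y _ IHx _ IHy|d s x dx IH|d E x LE dx IH].
- by rewrite iL_iS_comm //; apply: filt_iS.
- exact: filtS.
- by rewrite mulrDr mulrDl opprD addrACA; apply: filtD.
- by rewrite commutatorMr iL_iS_comm //; apply: filtD; apply: filt_mulS.
- rewrite commutatorMr -iL_bracket //; apply: filtD; apply: filt_mulL => //.
  exact: (tri_bracket Ltri).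
Qed.

Definition filtered : {pred U} := fun u => `[< exists d, filt d u >].

Fact filtered_subalg : subalg_closed filtered.
Proof.
split.
- by apply/asboolP; exists 0%N; rewrite -(rmorph1 iS); apply: filt_iS.
- move=> c x y /asboolP[a ax] /asboolP[b ay]; apply/asboolP; exists (maxn a b).
  by apply/filtD/(filt_le (leq_maxr a b) ay)/filtZ/(filt_le (leq_maxl a b) ax).
- move=> x y /asboolP[a ax] /asboolP[b ay]; apply/asboolP.
  by exists (a + b)%N; apply: filtM.
Qed.
HB.instance Definition _ :=
  GRing.isSubalgClosed.Build k U filtered (GRing.subalg_closed_semi filtered_subalg).

Lemma filtered_iS s : iS s \in filtered.
Proof. by apply/asboolP; exists 0%N; apply: filt_iS. Qed.

Lemma filtered_iL D : L D -> iL D \in filtered.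
Proof. by move=> LD; apply/asboolP; exists 1%N; apply: filt_iL. Qed.

Definition iS_filtered s : subalg filtered := Subalg (filtered_iS s).
Definition iL_filtered D : subalg filtered :=
  if pselect (L D) is left LD then Subalg (filtered_iL LD) else 0.

Lemma iL_filteredE D : L D -> val (iL_filtered D) = iL D.
Proof. by rewrite /iL_filtered; case: pselect. Qed.

Lemma LR_rep_filtered : LR_rep L iS_filtered iL_filtered.
Proof.
split.
- by split=> [|x y|x y|c x]; apply: val_inj => /=;
    rewrite ?rmorph1 ?rmorphM ?rmorphD ?linearZ.
- move=> D E LD LE; apply: val_inj => /=.
  by rewrite !iL_filteredE ?iL_add //; exact: (tri_add Ltri).
- move=> s D LD; apply: val_inj => /=.
  by rewrite !iL_filteredE ?iL_smul //; exact: (tri_smul Ltri).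
- move=> D E LD LE; apply: val_inj => /=.
  by rewrite !iL_filteredE ?iL_bracket //; exact: (tri_bracket Ltri).
- by move=> s D LD; apply: val_inj => /=; rewrite !iL_filteredE ?iL_iS_comm.
Qed.

Lemma filt_exhaustive u : exists d, filt d u.
Proof.
have [f [[f1 fM fD fZ] fS fL _]] := HU.2 _ _ _ LR_rep_filtered.
have <- : val (f u) = u.
  rewrite -[RHS](@enveloping_morph_id (val \o f)) // => [|s|D LD] /=.
  - by split=> [|x y|x y|c x] /=; rewrite ?f1 ?fM ?fD ?fZ.
  - by rewrite fS.
  - by rewrite fL // iL_filteredE.
exact/asboolP/(valP (f u)).
Qed.

Lemma iL_decomp D :
  L D -> exists c : 'I_n -> S, iL D = \sum_(i < n) iS (c i) * iL (alpha i).
Proof.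
move=> LD; have [c ->] := tri_span Ltri LD; exists c.
pose Dr r := fun p => \sum_(i <- r) c i * alpha i p.
suff /(_ (index_enum 'I_n))[] : forall r,
    L (Dr r) /\ iL (Dr r) = \sum_(i <- r) iS (c i) * iL (alpha i) by [].
elim=> [|i r [LDr IHr]].
  have -> : Dr [::] = smul_op 0 D.
    by apply/funext => p; rewrite /Dr /smul_op big_nil mul0r.
  by rewrite iL_smul // rmorph0 mul0r big_nil; split=> //; apply: (tri_smul Ltri).
have -> : Dr (i :: r) = add_op (smul_op (c i) (alpha i)) (Dr r).
  by apply/funext => p; rewrite /Dr /add_op /smul_op big_cons.
have Lci : L (smul_op (c i) (alpha i)) by apply/(tri_smul Ltri)/(tri_basis_in Ltri).
rewrite iL_add // iL_smul ?big_cons ?IHr //; last exact: (tri_basis_in Ltri).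
by split=> //; apply: (tri_add Ltri).
Qed.

(** * Symbols *)

Definition beta (i : 'I_n) : U := iL (alpha i).
Local Notation mono m := (mmap1 beta m).
(* The variable [i] of a symbol [P : {mpoly S[n]}] stands for [beta i], and
   its monomials for the ordered products [mono m]. *)
Local Notation symb := (mmap iS beta).

Lemma symbZ c P : symb (c *: P) = iS c * symb P.
Proof. exact: mmapZ. Qed.

Lemma symbX m : symb 'X_[m] = mono m.
Proof. exact: mmapX. Qed.

Lemma symbC c : symb c%:MP = iS c.
Proof. exact: mmapC. Qed.

Lemma filt_beta i : filt 1 (beta i).
Proof. exact/filt_iL/(tri_basis_in Ltri). Qed.

Lemma filt_beta_exp i e : filt e (beta i ^+ e).
Proof.
elim: e => [|e IHe]; first by rewrite expr0; apply: filt1.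
by rewrite exprS -add1n; apply/filtM/IHe/filt_beta.
Qed.

Lemma filt_prod_beta (r : seq 'I_n) (e : 'I_n -> nat) :
  filt (\sum_(i <- r) e i) (\prod_(i <- r) beta i ^+ e i).
Proof.
apply: (big_rec2 filt) => [|i d x _ dx]; first exact: filt1.
exact/filtM/dx/filt_beta_exp.
Qed.

Lemma filt_mono m : filt (mdeg m) (mono m).
Proof. by rewrite mdegE; apply: filt_prod_beta. Qed.

Lemma mono_reorder i m : filt (mdeg m) (beta i * mono m - mono (U_(i) + m)).
Proof.
rewrite mdegE /mmap1; have : i \in index_enum 'I_n by rewrite mem_index_enum.
have : uniq (index_enum 'I_n) by rewrite index_enum_uniq.
elim: (index_enum 'I_n) => // j r IHr /andP[jr r_uniq].
rewrite inE !big_cons mnmDE mnm1E.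
have [ij _|ij /= ir] := eqVneq i j; first rewrite -{}ij in jr *.
  have -> : \prod_(l <- r) beta l ^+ (U_(i) + m)%MM l = \prod_(l <- r) beta l ^+ m l.
    apply: eq_big_seq => l lr; rewrite mnmDE mnm1E (_ : (i == l) = false) //.
    by apply: contraNF jr => /eqP ->.
  by rewrite add1n exprS -!mulrA subrr; apply: filt0.
rewrite add0n commutator_shift; apply: filtD; apply: filtM; last exact: IHr.
- exact/filt_commL/filt_beta_exp/(tri_basis_in Ltri).
- exact: filt_prod_beta.
- exact: filt_beta_exp.
Qed.

Lemma symb_mulX i d P : P \is d.-homog -> filt d (beta i * symb P - symb ('X_i * P)).
Proof.
move: P; apply: homog_ind => [|P Q dP dQ|c m mdeg_m].
- by rewrite !(mulr0, raddf0, addr0); apply: filt0.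
- by rewrite mulrDr !(raddfD symb) mulrDr opprD addrACA; apply: filtD.
rewrite -scalerAr -mpolyXD !symbZ !symbX mulrA.
have -> : beta i * iS c = iS c * beta i + iS (alpha i c).
  by rewrite -(iL_iS_comm c (tri_basis_in Ltri i)) addrC subrK.
rewrite mulrDl addrAC -mulrA -mulrBr -mdeg_m.
by apply: filtD; apply: filt_mulS; [apply: mono_reorder | apply: filt_mono].
Qed.

Lemma symb_top d x : filt d x -> exists2 P, P \is d.-homog & filt_lt d (x - symb P).
Proof.
elim=> {d x} [[|d] s|d x dx _|d x y _ [P homP xP] _ [Q homQ yQ]|d s x _ [P homP xP]|].
- exists s%:MP; last by rewrite symbC subrr.
  by rewrite -[s%:MP]mulr1 mul_mpolyC; apply/rpredZ/dhomog1.
- by exists 0; rewrite ?rpred0 // raddf0 subr0; apply: filt_iS.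
- by exists 0; rewrite ?rpred0 // raddf0 subr0.
- by exists (P + Q); rewrite ?rpredD // raddfD opprD addrACA; apply: filt_ltD.
- by exists (s *: P); rewrite ?rpredZ // symbZ -mulrBr; apply: filt_lt_mulS.
move=> d D x LD _ [P homP xP]; have [c iLD] := iL_decomp LD.
exists (\sum_(i < n) c i *: ('X_i * P)).
  apply: rpred_sum => i _; apply: rpredZ; rewrite -add1n; apply: dhomogM => //.
  by rewrite dhomogX /= mdeg1.
have -> : iL D * x - symb (\sum_(i < n) c i *: ('X_i * P)) =
    iL D * (x - symb P) + \sum_(i < n) iS (c i) * (beta i * symb P - symb ('X_i * P)).
  rewrite (big_morph symb (mmapD _ _) (mmap0 _ _)) mulrBr -addrA; congr (_ + _).
  under eq_bigr do rewrite symbZ.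
  rewrite iLD mulr_suml -[in RHS]sumrN -big_split -sumrN; apply: eq_bigr => i _.
  by rewrite /= mulrBr mulrA addKr.
apply: filtD; first exact: filt_lt_mulL.
by apply: filt_sum => i _; apply/filt_mulS/symb_mulX.
Qed.

Local Notation sderiv t := (mdirderiv (fun i => alpha i t)).

Lemma mono_ad t d m : mdeg m = d.+1 -> filt_lt d (ad t (mono m) - symb (sderiv t 'X_[m])).
Proof.
elim: d m => [|d IHd] m /mdeg_eqS[i [m' [-> mdeg_m']]].
  have -> : m' = 0%MM by apply/eqP; rewrite -mdeg_eq0 mdeg_m'.
  by rewrite addm0 mmap1U mdirderivU symbC ad_iL ?subrr //; exact: (tri_basis_in Ltri).
have Li := tri_basis_in Ltri i; set Q := sderiv t 'X_[m'].
have -> : ad t (mono (U_(i) + m')) - symb (sderiv t 'X_[U_(i) + m']) =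
    ad t (mono (U_(i) + m') - beta i * mono m') +
    (ad t (beta i * mono m') - symb (sderiv t 'X_[U_(i) + m'])).
  by rewrite (raddfB (ad t)) /= [RHS]addrA subrK.
have -> : ad t (beta i * mono m') - symb (sderiv t 'X_[U_(i) + m']) =
    beta i * (ad t (mono m') - symb Q) + (beta i * symb Q - symb ('X_i * Q)).
  rewrite mpolyXD mdirderivXM mmapD symbZ symbX adM ad_iL //.
  by rewrite [beta i * (_ - symb Q)]mulrBr [RHS]addrA subrK opprD addrACA subrr add0r.
apply: filt_ltD.
  by apply: ad_filt; rewrite -opprB -mdeg_m'; apply/filtN/mono_reorder.
apply: filtD; first exact/filt_lt_mulL/IHd.
by apply/symb_mulX/mdirderiv_homog; rewrite dhomogX /= mdeg_m'.
Qed.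

Lemma symb_ad t d P : P \is d.+1.-homog -> filt_lt d (ad t (symb P) - symb (sderiv t P)).
Proof.
move: P; apply: homog_ind => [|P Q dP dQ|c m mdeg_m].
- by rewrite !raddf0 addr0; apply: filt_lt0.
- rewrite mmapD (raddfD (ad t)) (linearD (mdirderiv _)) mmapD opprD addrACA.
  exact: filt_ltD dP dQ.
- by rewrite linearZ /= !symbZ ad_mulS -mulrBr symbX; apply/filt_lt_mulS/mono_ad.
Qed.

Lemma symb_sderiv_lt t d P :
  P \is d.+1.-homog -> filt_lt d (ad t (symb P)) -> filt_lt d (symb (sderiv t P)).
Proof.
move=> homP adP; rewrite -(subKr (ad t (symb P)) (symb (sderiv t P))).
exact/filt_ltB/symb_ad.
Qed.

Lemma homog_sderiv_eq0 d P : P \is d.+1.-homog -> (forall j, sderiv 'X_j P = 0) -> P = 0.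
Proof.
move=> homP dP; apply: (mderiv_eq0_homog (mpoly_char0 _ k_char0) homP).
apply: (@mderiv_triangular_eq0 _ _ (fun i j => alpha i 'X_j)) => //.
- exact: (tri_triang Ltri).
- by move=> i; have /prodf_neq0 := tri_nonzero Ltri; apply.
Qed.

Lemma symb_lt_eq0 d P : P \is d.-homog -> filt_lt d (symb P) -> P = 0.
Proof.
elim: d P => [|d IHd] P homP.
  rewrite (dhomog0_mpolyC homP) symbC /= => iSP0.
  by have -> : P@_0 = 0 by apply: iS_inj; rewrite iSP0 rmorph0.
move=> symbP; apply: (homog_sderiv_eq0 homP) => j.
apply: IHd; first exact: mdirderiv_homog.
exact/symb_sderiv_lt/ad_filt.
Qed.

Lemma central_filt0 d u : (forall s, ad s u = 0) -> filt d u -> filt 0 u.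
Proof.
move=> u_central; elim: d => // d IHd /symb_top[P homP uP].
suff P0 : P = 0 by apply: IHd; move: uP; rewrite P0 raddf0 subr0.
apply: (homog_sderiv_eq0 homP) => j; apply: (symb_lt_eq0 (mdirderiv_homog _ homP)).
apply: symb_sderiv_lt homP _; have := ad_filt 'X_j uP.
by rewrite (raddfB (ad _)) /= u_central sub0r => /filt_ltN; rewrite opprK.
Qed.

Lemma centralizer_iS u : (forall s, ad s u = 0) -> exists s, u = iS s.
Proof.
move=> u_central; have [d /(central_filt0 u_central)] := filt_exhaustive u.
exact: filt0_iS.
Qed.

End EnvelopingAlgebra.

Theorem proposition3p3 (k : fieldType) (n : nat)
  (Hchar : [pchar k] =i pred0) (Hn : (0 < n)%N)
  (L : ({mpoly k[n]} -> {mpoly k[n]}) -> Prop)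
  (alpha : 'I_n -> ({mpoly k[n]} -> {mpoly k[n]}))
  (Htri : triangularizable L alpha)
  (U : algType k) (iS : {mpoly k[n]} -> U) (iL : ({mpoly k[n]} -> {mpoly k[n]}) -> U)
  (HU : is_enveloping_algebra L iS iL) :
  injective iS /\
  (forall u : U, (forall s : {mpoly k[n]}, u * iS s - iS s * u = 0) <->
                 exists s : {mpoly k[n]}, u = iS s).
Proof.
split; first exact: (@iS_inj _ _ _ _ Htri _ _ _ HU).
move=> u; split; first exact: (centralizer_iS Htri HU Hchar).
by move=> [s ->] t; rewrite (iS_comm HU) subrr.
Qed.
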